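(* For $m,n\in \mathbb{Z}_{>1}$, \begin{align*} \zeta(m,n)=P(m,n), \end{align*} where \begin{align*} P(m,n):=&\sum^{m-1}_{i=0}(-1)^{i}\binom{n+i-1}{i}\zeta(n+i)\zeta_{\sqcup\!\sqcup}(m-i)\\ &\ +(-1)^{m}\sum^{n-1}_{j=0}\binom{m+j-1}{j}\Bigl\{\zeta(m+j)\zeta_{\sqcup\!\sqcup}(n-j)-\zeta^{\star}(n-j,m+j)\Bigr\}. \end{align*}
   Context: For $n\in\mathbb{Z}_{>0}$, $m\in\mathbb{Z}_{>1}$: $\zeta(m)=\sum_{k\ge1}k^{-m}$, the double zeta value $\zeta(n,m)=\sum_{0<k_1<k_2}k_1^{-n}k_2^{-m}$, and the double zeta star value $\zeta^\star(n,m)=\sum_{0<k_1\le k_2}k_1^{-n}k_2^{-m}=\zeta(n,m)+\zeta(m+n)$. The shuffle regularized values $\zeta_{\sqcup\!\sqcup}(m)\in\mathbb{R}[T]$ (for $m\in\mathbb{Z}_{>0}$) are defined as follows: as $\epsilon\to0$, $\sum_{k>0}(1-\epsilon)^k/k^m\sim c_0+c_1(-\log\epsilon)$ with $c_i\in\mathbb{R}$, and $\zeta_{\sqcup\!\sqcup}(m):=c_0+c_1T$. In particular $\zeta_{\sqcup\!\sqcup}(1)=T$ and $\zeta_{\sqcup\!\sqcup}(m)=\zeta(m)$ for $m>1$. The identity is an equality in $\mathbb{R}[T]$ (the $T$-terms cancel). *)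

From HB Require Import structures.
From mathcomp Require Import all_boot all_order all_algebra.
From mathcomp Require Import all_classical all_reals all_analysis.
Set Implicit Arguments. Unset Strict Implicit. Unset Printing Implicit Defensive.
Import Order.TTheory GRing.Theory Num.Theory.
Local Open Scope ring_scope.

Definition zeta (R : realType) (m : nat) : R :=
  limn (fun N : nat => \sum_(1 <= k < N) (k%:R : R) ^- m).

Definition zeta2 (R : realType) (n m : nat) : R :=
  limn (fun N : nat => \sum_(1 <= k2 < N)
          ((\sum_(1 <= k1 < k2) (k1%:R : R) ^- n) * (k2%:R : R) ^- m)).

Definition zeta2_star (R : realType) (n m : nat) : R :=
  limn (fun N : nat => \sum_(1 <= k2 < N)
          ((\sum_(1 <= k1 < k2.+1) (k1%:R : R) ^- n) * (k2%:R : R) ^- m)).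

(* Shuffle-regularized zeta value in R[T] (T = 'X), for m >= 1:
   zeta_sh(1) = T and zeta_sh(m) = zeta(m) for m > 1. *)
Definition zeta_sh (R : realType) (m : nat) : {poly R} :=
  if m == 1%N then 'X else (zeta R m)%:P.

From HB Require Import structures.
From mathcomp Require Import all_boot all_order all_algebra.
From mathcomp Require Import all_classical all_reals all_analysis.
From mathcomp Require Import ring lra zify.
Set Implicit Arguments. Unset Strict Implicit. Unset Printing Implicit Defensive.
Import Order.TTheory GRing.Theory Num.Theory.
Local Open Scope ring_scope.
Import numFieldNormedType.Exports.

(* Partial fractions, 1/(k^m l^n) = sum_i (-1)^i C(n+i-1,i) / (k^(m-i) (l-k)^(n+i))
   + (-1)^m sum_j C(m+j-1,j) / ((l-k)^(m+j) l^(n-j)), summed over 0 < k < l < N,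
   write the truncated double zeta value zeta_N(m,n) through the triangular
   truncations sum_(k+d<N) k^-a d^-b of the products zeta(a) zeta(b) and through
   truncated double zeta values zeta_N(m+j,n-j) = zeta_N(m+j) zeta_N(n-j) -
   zeta*_N(n-j,m+j). A triangular truncation differs from zeta_N(a) zeta_N(b) by
   O(1/N) when b >= 2 and a + b >= 4. The only divergent products,
   zeta_N(1) zeta_N(m+n-1) from i = m-1 and j = n-1, cancel exactly; this is the
   cancellation of the T-terms in the shuffle-regularized statement. *)

Definition multichoose (n i : nat) : nat := 'C(n + i - 1, i).

Lemma multichoose0 n : multichoose n 0 = 1%N.
Proof. by rewrite /multichoose bin0. Qed.

Lemma multichoose0S i : multichoose 0 i.+1 = 0%N.
Proof. by rewrite /multichoose add0n subn1 bin_small. Qed.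

Lemma multichooseSS n i :
  multichoose n.+1 i.+1 = (multichoose n i.+1 + multichoose n.+1 i)%N.
Proof.
rewrite /multichoose !addSn !addnS !subn1 /= -binS.
by case: n => [|n]; rewrite ?addSn.
Qed.

Lemma multichooseC m n : multichoose m.+1 n = multichoose n.+1 m.
Proof.
rewrite /multichoose !addSn !subn1 /=.
by rewrite addnC -bin_sub ?leq_addr // addKn.
Qed.

Section PartialFraction.
Variable F : comPzRingType.
Implicit Types u v w : F.

Definition pfrac u w (m n : nat) : F :=
  \sum_(0 <= i < m) (-1) ^+ i * (multichoose n i)%:R * u ^+ (m - i) * w ^+ (n + i).

Lemma pfrac0n u w n : pfrac u w 0 n = 0.
Proof. by rewrite /pfrac big_geq. Qed.

Lemma pfrac_n0 u w m : (0 < m)%N -> pfrac u w m 0 = u ^+ m.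
Proof.
case: m => // m _; rewrite /pfrac big_nat_recl // big1_seq ?addr0 => [|i _].
  by rewrite multichoose0 subn0 !mul1r mulr1.
by rewrite multichoose0S !(mulr0, mul0r).
Qed.

Lemma pfracSS u w m n :
  w * (pfrac u w m.+1 n - pfrac u w m n.+1) = pfrac u w m.+1 n.+1.
Proof.
rewrite /pfrac !big_nat_recl // !multichoose0 mulrBr mulrDr -addrA.
congr (_ + _); first by rewrite !subn0 !addn0 !exprS; ring.
rewrite !mulr_sumr -sumrB; apply: eq_bigr => i _.
rewrite multichooseSS natrD !subSS !addnS !addSn !exprS; ring.
Qed.

Lemma pfrac_opp u w m n :
  pfrac u (- w) m n = (-1) ^+ n *
    \sum_(0 <= i < m) (multichoose n i)%:R * u ^+ (m - i) * w ^+ (n + i).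
Proof.
rewrite /pfrac mulr_sumr; apply: eq_bigr => i _.
have sqr_sign : (-1) ^+ i * (-1) ^+ i = 1 :> F.
  by rewrite -exprD addnn -mul2n exprM sqrrN !expr1n.
rewrite [(- w) ^+ _]exprNn exprD; ring: sqr_sign.
Qed.

Lemma partial_fraction u v w m n : u * v = w * (u - v) -> (0 < m + n)%N ->
  u ^+ m * v ^+ n = pfrac u w m n + pfrac v (- w) n m.
Proof.
move=> uvw; elim: m n => [|m IHm] n.
  by move=> n_gt0; rewrite pfrac0n pfrac_n0 // expr0 mul1r add0r.
elim: n => [|n IHn] _; first by rewrite pfrac0n pfrac_n0 // expr0 mulr1 addr0.
have -> : u ^+ m.+1 * v ^+ n.+1 = w * (u ^+ m.+1 * v ^+ n - u ^+ m * v ^+ n.+1).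
  by rewrite !exprS; ring: uvw.
rewrite IHn // IHm ?addnS // -(pfracSS u w) -(pfracSS v (- w)); ring.
Qed.

End PartialFraction.

Lemma inv_partial_fraction (F : fieldType) (x y : F) m n :
  x != 0 -> y != 0 -> y != x -> (0 < m + n)%N ->
  x ^- m * y ^- n =
    \sum_(0 <= i < m) (-1) ^+ i * (multichoose n i)%:R * (x ^- (m - i) * (y - x) ^- (n + i))
    + (-1) ^+ m *
      \sum_(0 <= j < n) (multichoose m j)%:R * ((y - x) ^- (m + j) * y ^- (n - j)).
Proof.
move=> x0 y0 yx mn0; rewrite -subr_eq0 in yx.
have uvw : x^-1 * y^-1 = (y - x)^-1 * (x^-1 - y^-1) by field; apply/and3P.
rewrite -!exprVn (partial_fraction uvw mn0) pfrac_opp /pfrac.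
by congr (_ + _ * _); apply: eq_bigr => i _; rewrite !exprVn; ring.
Qed.

Definition zeta_trunc (R : numFieldType) (a N : nat) : R :=
  \sum_(1 <= k < N) (k%:R : R) ^- a.

Definition zeta2_trunc (R : numFieldType) (a b N : nat) : R :=
  \sum_(1 <= l < N) zeta_trunc R a l * (l%:R : R) ^- b.

Definition zeta2_star_trunc (R : numFieldType) (b a N : nat) : R :=
  \sum_(1 <= l < N) zeta_trunc R b l.+1 * (l%:R : R) ^- a.

Definition cauchy_trunc (R : numFieldType) (a b N : nat) : R :=
  \sum_(1 <= l < N) \sum_(1 <= k < l) (k%:R : R) ^- a * ((l - k)%:R : R) ^- b.

Definition cauchy_defect (R : numFieldType) (a b N : nat) : R :=
  zeta_trunc R a N * zeta_trunc R b N - cauchy_trunc R a b N.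

Lemma big_nat_mirror1 (V : nmodType) (f : nat -> V) N :
  \sum_(1 <= k < N) f (N - k)%N = \sum_(1 <= k < N) f k.
Proof. by rewrite [RHS]big_nat_rev; apply: eq_bigr => k _; rewrite add1n subSS. Qed.

Section Truncations.
Variable R : numFieldType.

Lemma exchange_lincomb (s : seq nat) (e : R) p q (c d : nat -> R) (X Y : nat -> nat -> R) :
  \sum_(l <- s) (\sum_(0 <= i < p) c i * X i l + e * \sum_(0 <= j < q) d j * Y j l) =
  \sum_(0 <= i < p) c i * \sum_(l <- s) X i l
  + e * \sum_(0 <= j < q) d j * \sum_(l <- s) Y j l.
Proof.
rewrite big_split -mulr_sumr; congr (_ + _ * _); rewrite exchange_big;
  by apply: eq_bigr => i _; rewrite mulr_sumr.
Qed.

Lemma zeta2_trunc_pfrac m n N : (0 < m + n)%N ->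
  zeta2_trunc R m n N =
    \sum_(0 <= i < m) (-1) ^+ i * (multichoose n i)%:R * cauchy_trunc R (m - i) (n + i) N
    + (-1) ^+ m * \sum_(0 <= j < n) (multichoose m j)%:R * zeta2_trunc R (m + j) (n - j) N.
Proof.
move=> mn0; rewrite /zeta2_trunc /cauchy_trunc -exchange_lincomb.
apply: eq_big_nat => l _.
have mirror c : zeta_trunc R c l = \sum_(1 <= k < l) ((l - k)%:R : R) ^- c.
  by rewrite (big_nat_mirror1 (fun k => (k%:R : R) ^- c)).
rewrite {1}/zeta_trunc mulr_suml.
under [X in _ + _ * X]eq_bigr do rewrite mirror mulr_suml.
rewrite -exchange_lincomb; apply: eq_big_nat => k /andP[k_gt0 k_lt].
rewrite natrB ?(ltnW k_lt) //; apply: inv_partial_fraction mn0.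
- by rewrite pnatr_eq0 -lt0n.
- by rewrite pnatr_eq0 -lt0n (ltn_trans k_gt0).
- by rewrite eqr_nat neq_ltn k_lt orbT.
Qed.

Lemma zeta2_trunc_add_star a b N :
  zeta2_trunc R a b N + zeta2_star_trunc R b a N = zeta_trunc R a N * zeta_trunc R b N.
Proof.
rewrite /zeta2_trunc /zeta2_star_trunc /zeta_trunc.
elim: N => [|[|N] IH]; try by rewrite !big_geq ?mulr0 ?addr0.
by rewrite !(big_nat_recr N.+1) //= addrACA IH; ring.
Qed.

Lemma cauchy_trunc_rec a b N :
  cauchy_trunc R a b N = \sum_(1 <= k < N) (k%:R : R) ^- a * zeta_trunc R b (N - k).
Proof.
elim: N => [|[|N] IH]; try by rewrite /cauchy_trunc !big_geq.
rewrite /cauchy_trunc big_nat_recr //= -/(cauchy_trunc R a b N.+1) IH.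
rewrite [in RHS]big_nat_recr //= subSS subSnn [zeta_trunc R b 1]big_geq //.
rewrite mulr0 addr0 -big_split /=.
apply: eq_big_nat => k /andP[_ k_lt]; rewrite [(N.+2 - k)%N]subSn 1?ltnW //.
by rewrite /zeta_trunc big_nat_recr ?subn_gt0 //= mulrDr.
Qed.

Lemma cauchy_defectE a b N :
  cauchy_defect R a b N =
  \sum_(1 <= k < N) (k%:R : R) ^- a * \sum_(N - k <= d < N) (d%:R : R) ^- b.
Proof.
rewrite /cauchy_defect cauchy_trunc_rec {1}/zeta_trunc mulr_suml -sumrB.
apply: eq_big_nat => k /andP[_ k_lt]; rewrite -mulrBr /zeta_trunc.
rewrite (big_cat_nat _ (n := N - k)) ?subn_gt0 ?leq_subr //.
by rewrite addrAC subrr add0r.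
Qed.

(* The divergent products zeta_N(1) zeta_N(m+n-1) of the terms i = m-1 and
   j = n-1 cancel, by the symmetry of multichoose. *)
Lemma zeta2_trunc_closed_form m n N : (0 < m)%N -> (0 < n)%N ->
  zeta2_trunc R m n N =
    \sum_(0 <= i < m.-1)
       (-1) ^+ i * (multichoose n i)%:R * zeta_trunc R (n + i) N * zeta_trunc R (m - i) N
    - \sum_(0 <= i < m) (-1) ^+ i * (multichoose n i)%:R * cauchy_defect R (m - i) (n + i) N
    + (-1) ^+ m *
      (\sum_(0 <= j < n.-1)
         (multichoose m j)%:R * zeta_trunc R (m + j) N * zeta_trunc R (n - j) N
       - \sum_(0 <= j < n) (multichoose m j)%:R * zeta2_star_trunc R (n - j) (m + j) N).
Proof.
case: m => // m; case: n => // n _ _ /=; rewrite zeta2_trunc_pfrac //.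
set c := fun i => (-1) ^+ i * (multichoose n.+1 i)%:R : R.
set d := fun j => (multichoose m.+1 j)%:R : R.
have cauchyE : \sum_(0 <= i < m.+1) c i * cauchy_trunc R (m.+1 - i) (n.+1 + i) N =
    \sum_(0 <= i < m.+1) c i * zeta_trunc R (n.+1 + i) N * zeta_trunc R (m.+1 - i) N
    - \sum_(0 <= i < m.+1) c i * cauchy_defect R (m.+1 - i) (n.+1 + i) N.
  by rewrite -sumrB; apply: eq_bigr => i _; rewrite /cauchy_defect; ring.
have zeta2E : \sum_(0 <= j < n.+1) d j * zeta2_trunc R (m.+1 + j) (n.+1 - j) N =
    \sum_(0 <= j < n.+1) d j * zeta_trunc R (m.+1 + j) N * zeta_trunc R (n.+1 - j) N
    - \sum_(0 <= j < n.+1) d j * zeta2_star_trunc R (n.+1 - j) (m.+1 + j) N.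
  by rewrite -sumrB; apply: eq_bigr => j _; rewrite -mulrA -zeta2_trunc_add_star; ring.
rewrite cauchyE zeta2E.
rewrite [\sum_(0 <= i < m.+1) c i * _ * _]big_nat_recr //.
rewrite [\sum_(0 <= j < n.+1) d j * _ * _]big_nat_recr //= !subSnn.
by rewrite /c /d -multichooseC [(n.+1 + m)%N]addnC -addSnnS exprS; ring.
Qed.

End Truncations.

Section Bounds.
Variable R : realFieldType.

Lemma natrVX_ge0 k a : 0 <= (k%:R : R) ^- a.
Proof. by rewrite invr_ge0 exprn_ge0. Qed.

Lemma natrVX_le k a b : (0 < k)%N -> (b <= a)%N -> (k%:R : R) ^- a <= k%:R ^- b.
Proof.
move=> k_gt0 ba; rewrite -!exprVn ler_wiXn2l // ?invr_ge0 ?ler0n //.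
by rewrite invf_le1 ?ler1n ?ltr0n.
Qed.

Lemma zeta_trunc_ge0 a N : 0 <= zeta_trunc R a N.
Proof. by apply: sumr_ge0 => k _; apply: natrVX_ge0. Qed.

Lemma zeta_trunc1_le N : zeta_trunc R 1 N.+1 <= N%:R.
Proof.
rewrite -[X in X%:R](subn1 N.+1) -sumr_const_nat; apply: ler_sum_nat => k /andP[k_gt0 _].
by rewrite expr1 invf_le1 ?ler1n ?ltr0n.
Qed.

Lemma inv_sqr_le_telescope (x : R) : 1 <= x -> (x ^+ 2)^-1 <= 2 * (x^-1 - (x + 1)^-1).
Proof.
move=> x_ge1; have x_gt0 : 0 < x by lra.
have -> : 2 * (x^-1 - (x + 1)^-1) = (x * (x + 1) / 2)^-1.
  by field; rewrite !gt_eqF //; lra.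
by rewrite lef_pV2 ?posrE; nra.
Qed.

Lemma zeta_tail_le b p q : (0 < p <= q)%N ->
  \sum_(p <= d < q) (d%:R : R) ^- (b + 2) <= p%:R ^- b * (2 * (p%:R^-1 - q%:R^-1)).
Proof.
case/andP=> p_gt0 pq.
have sum_telescope :
    \sum_(p <= d < q) 2 * ((d%:R : R)^-1 - d.+1%:R^-1) = 2 * (p%:R^-1 - q%:R^-1).
  rewrite -mulr_sumr (telescope_sumr_eq (fun d => - (d%:R : R)^-1)) //.
    by rewrite opprK addrC.
  by move=> d _; rewrite opprK addrC.
rewrite -sum_telescope mulr_sumr; apply: ler_sum_nat => d /andP[pd _].
have d_gt0 : (0 < d)%N := leq_trans p_gt0 pd.
rewrite exprD invfM; apply: ler_pM; rewrite ?natrVX_ge0 //.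
  by rewrite lef_pV2 ?posrE ?exprn_gt0 ?ltr0n // lerXn2r ?nnegrE ?ler_nat ?ler0n.
by rewrite -[d.+1%:R]natr1; apply: inv_sqr_le_telescope; rewrite ler1n.
Qed.

Lemma zeta_trunc2_le N : zeta_trunc R 2 N <= 2.
Proof.
case: N => [|N]; first by rewrite /zeta_trunc big_geq.
apply: le_trans (zeta_tail_le 0 (isT : (0 < 1 <= N.+1)%N)) _.
by rewrite expr0 invr1 mul1r ler_piMr // lerBlDr lerDl invr_ge0 ler0n.
Qed.

Lemma zeta_trunc_le2 b N : (1 < b)%N -> zeta_trunc R b N <= 2.
Proof.
move=> b_gt1; apply: le_trans (zeta_trunc2_le N).
by apply: ler_sum_nat => k /andP[k_gt0 _]; apply: natrVX_le.
Qed.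

Lemma mul_le_add_sqr (x y : R) : x * y <= x ^+ 2 + y ^+ 2.
Proof. by nra. Qed.

(* The tail sum over [N-k, N) telescopes to at most 2/(N-k) - 2/N, and
   (1/k) (1/(N-k) - 1/N) = 1/(N (N-k)). *)
Lemma cauchy_defect_term_le a b k N : (0 < a)%N -> (1 < b)%N -> (3 < a + b)%N ->
  (0 < k < N)%N ->
  (k%:R : R) ^- a * \sum_(N - k <= d < N) (d%:R : R) ^- b <=
  2 * N%:R^-1 * (k%:R ^- 2 + (N - k)%:R ^- 2).
Proof.
move=> a_gt0 b_gt1 ab_gt3 /andP[k_gt0 kN].
have Nk_gt0 : (0 < N - k)%N by rewrite subn_gt0.
have range : (0 < N - k <= N)%N by rewrite Nk_gt0 leq_subr.
have weight : (k%:R : R)^-1 * ((N - k)%:R^-1 - N%:R^-1) = N%:R^-1 * (N - k)%:R^-1.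
  rewrite natrB ?(ltnW kN) //; field.
  by rewrite -natrB ?(ltnW kN) // !pnatr_eq0 -!lt0n Nk_gt0 k_gt0 (ltn_trans k_gt0 kN).
have tail_le c : (b >= c + 2)%N ->
    \sum_(N - k <= d < N) (d%:R : R) ^- b <= \sum_(N - k <= d < N) (d%:R : R) ^- (c + 2).
  by move=> cb; apply: ler_sum_nat => d /andP[d_ge _]; rewrite natrVX_le ?(leq_trans Nk_gt0).
have N_ge0 : 0 <= (N%:R : R)^-1 by rewrite invr_ge0 ler0n.
have sum_ge0 c : 0 <= \sum_(N - k <= d < N) (d%:R : R) ^- c.
  by apply: sumr_ge0 => d _; apply: natrVX_ge0.
have [a_ge2|a_lt2] := leqP 2 a.
  apply: le_trans
    (ler_pM (natrVX_ge0 _ _) (sum_ge0 _) (natrVX_le k_gt0 a_ge2) (tail_le 0 b_gt1)) _.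
  apply: le_trans (ler_wpM2l (natrVX_ge0 _ _) (zeta_tail_le 0 range)) _.
  have -> : (k%:R : R) ^- 2 * ((N - k)%:R ^- 0 * (2 * ((N - k)%:R^-1 - N%:R^-1))) =
      2 * N%:R^-1 * (k%:R^-1 * (N - k)%:R^-1).
    by rewrite expr0 invr1 mul1r -exprVn expr2 -mulrA [_^-1 * (2 * _)]mulrCA weight; ring.
  by rewrite -!exprVn ler_wpM2l ?mulr_ge0 ?mul_le_add_sqr.
have a1 : a = 1%N by apply/eqP; rewrite eqn_leq -ltnS a_lt2.
have b_ge3 : (1 + 2 <= b)%N by move: ab_gt3; rewrite a1.
rewrite a1; apply: le_trans (ler_wpM2l (natrVX_ge0 _ _) (tail_le 1 b_ge3)) _.
apply: le_trans (ler_wpM2l (natrVX_ge0 _ _) (zeta_tail_le 1 range)) _.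
have -> : (k%:R : R) ^- 1 * ((N - k)%:R ^- 1 * (2 * ((N - k)%:R^-1 - N%:R^-1))) =
    2 * N%:R^-1 * ((N - k)%:R^-1 ^+ 2).
  by rewrite !expr1 mulrCA [_^-1 * (2 * _)]mulrCA weight; ring.
by rewrite -!exprVn ler_wpM2l ?mulr_ge0 ?lerDr ?exprn_ge0.
Qed.

Lemma cauchy_defect_bound a b N : (0 < a)%N -> (1 < b)%N -> (3 < a + b)%N ->
  0 <= cauchy_defect R a b N <= 8 * N%:R^-1.
Proof.
move=> a_gt0 b_gt1 ab_gt3; rewrite cauchy_defectE; apply/andP; split.
  apply: sumr_ge0 => k _; rewrite mulr_ge0 ?natrVX_ge0 //.
  by apply: sumr_ge0 => d _; apply: natrVX_ge0.
apply: le_trans (ler_sum_nat (fun k => cauchy_defect_term_le a_gt0 b_gt1 ab_gt3)) _.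
rewrite -mulr_sumr big_split /= (big_nat_mirror1 (fun k => (k%:R : R) ^- 2)).
rewrite -/(zeta_trunc R 2 N).
have := zeta_trunc2_le N; have := zeta_trunc_ge0 2 N.
have : 0 <= (N%:R : R)^-1 by rewrite invr_ge0 ler0n.
nra.
Qed.

End Bounds.

Section Limits.
Variable R : realType.
Local Open Scope classical_set_scope.

Lemma cvg_sum_nat k (F : nat -> nat -> R) (l : nat -> R) :
  (forall i, (i < k)%N -> F i @ \oo --> l i) ->
  (fun N => \sum_(0 <= i < k) F i N) @ \oo --> \sum_(0 <= i < k) l i.
Proof.
move=> Fl; rewrite big_nat_cond; under eq_fun do rewrite big_nat_cond.
apply: (@cvg_big _ _ +%R 0 (fun i => (0 <= i < k)%N && true)) => //.
  exact: add_continuous.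
by move=> i /andP[/andP[_ /Fl]].
Qed.

Lemma cvgn_sum_le_inv_sqr (f : nat -> R) c :
  (forall k, (0 < k)%N -> 0 <= f k <= c * k%:R ^- 2) ->
  cvgn (fun N => \sum_(1 <= k < N) f k).
Proof.
move=> f_bound; apply: nondecreasing_is_cvgn.
  apply/nondecreasing_seqP => -[|N]; first by rewrite !big_geq.
  by rewrite [leRHS]big_nat_recr //= lerDl; case/andP: (f_bound N.+1 isT).
have c_ge0 : 0 <= c.
  by case/andP: (f_bound 1%N isT) => f1_ge0; rewrite expr1n invr1 mulr1; apply: le_trans.
exists (c * 2) => _ [N _ <-]; apply: le_trans (ler_wpM2l c_ge0 (zeta_trunc2_le R N)).
rewrite /zeta_trunc mulr_sumr; apply: ler_sum_nat => k /andP[k_gt0 _].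
by case/andP: (f_bound k k_gt0).
Qed.

Lemma cvg_zeta_trunc a : (1 < a)%N -> zeta_trunc R a @ \oo --> zeta R a.
Proof.
move=> a_gt1; apply: (@cvgn_sum_le_inv_sqr _ 1) => k k_gt0.
by rewrite natrVX_ge0 mul1r natrVX_le.
Qed.

(* The bound zeta_N(1) <= N used for b = 1 needs a >= 3, hence 3 < a + b. *)
Lemma cvg_zeta2_star_trunc b a : (0 < b)%N -> (1 < a)%N -> (3 < a + b)%N ->
  zeta2_star_trunc R b a @ \oo --> zeta2_star R b a.
Proof.
move=> b_gt0 a_gt1 ab_gt3; apply: (@cvgn_sum_le_inv_sqr _ 2) => l l_gt0.
rewrite mulr_ge0 ?zeta_trunc_ge0 ?natrVX_ge0 //=.
have [b_gt1|b_le1] := ltnP 1 b.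
  by apply: ler_pM; rewrite ?zeta_trunc_ge0 ?natrVX_ge0 ?zeta_trunc_le2 ?natrVX_le.
have b1 : b = 1%N by apply/eqP; rewrite eqn_leq b_le1.
have a_ge3 : (1 + 2 <= a)%N by move: ab_gt3; rewrite b1 addn1.
rewrite b1.
apply: le_trans (ler_pM (zeta_trunc_ge0 _ _ _) (natrVX_ge0 _ _ _)
                         (zeta_trunc1_le _ _) (natrVX_le _ l_gt0 a_ge3)) _.
rewrite exprD invfM mulrA expr1 mulfV ?pnatr_eq0 -?lt0n // mul1r ler_peMl ?natrVX_ge0 //.
by rewrite ler1n.
Qed.

Lemma cvg_cauchy_defect a b : (0 < a)%N -> (1 < b)%N -> (3 < a + b)%N ->
  cauchy_defect R a b @ \oo --> 0.
Proof.
move=> a_gt0 b_gt1 ab_gt3.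
have inv_cvg0 : (fun N => (N%:R : R)^-1) @ \oo --> 0.
  by rewrite -cvg_shiftS; exact: cvg_harmonic.
apply: (@squeeze_cvgr _ _ _ _ (cst 0) (fun N => 8 * N%:R^-1)).
- by apply: nearW => N; apply: cauchy_defect_bound.
- exact: cvg_cst.
- by rewrite -(mulr0 8); apply: cvgMl_tmp.
Qed.

(* The statement evaluated at T = 0. *)
Lemma zeta2_closed_form m n : (1 < m)%N -> (1 < n)%N ->
  zeta2 R m n =
    \sum_(0 <= i < m.-1) (-1) ^+ i * (multichoose n i)%:R * zeta R (n + i) * zeta R (m - i)
    + (-1) ^+ m *
      (\sum_(0 <= j < n.-1) (multichoose m j)%:R * zeta R (m + j) * zeta R (n - j)
       - \sum_(0 <= j < n) (multichoose m j)%:R * zeta2_star R (n - j) (m + j)).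
Proof.
move=> m_gt1 n_gt1; have [m_gt0 n_gt0] : (0 < m)%N /\ (0 < n)%N by split; apply: ltnW.
have zeta2_cvg : zeta2_trunc R m n @ \oo -->
    \sum_(0 <= i < m.-1) (-1) ^+ i * (multichoose n i)%:R * zeta R (n + i) * zeta R (m - i)
    - \sum_(0 <= i < m) (-1) ^+ i * (multichoose n i)%:R * 0
    + (-1) ^+ m *
      (\sum_(0 <= j < n.-1) (multichoose m j)%:R * zeta R (m + j) * zeta R (n - j)
       - \sum_(0 <= j < n) (multichoose m j)%:R * zeta2_star R (n - j) (m + j)).
  rewrite (funext (fun N => zeta2_trunc_closed_form R N m_gt0 n_gt0)).
  apply: cvgD; [apply: cvgB|apply: cvgMl_tmp; apply: cvgB]; apply: cvg_sum_nat => i i_lt.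
  - by apply: cvgM; [apply: cvgMl_tmp|]; apply: cvg_zeta_trunc; lia.
  - by apply: cvgMl_tmp; apply: cvg_cauchy_defect; lia.
  - by apply: cvgM; [apply: cvgMl_tmp|]; apply: cvg_zeta_trunc; lia.
  - by apply: cvgMl_tmp; apply: cvg_zeta2_star_trunc; lia.
have -> : zeta2 R m n = lim (zeta2_trunc R m n @ \oo) by [].
rewrite (norm_cvg_lim zeta2_cvg) [\sum_(0 <= i < m) _]big1 ?subr0 // => i _.
exact: mulr0.
Qed.

End Limits.

Lemma sum_scale_zeta_sh (R : realType) (a : nat -> R) m : (0 < m)%N ->
  \sum_(0 <= i < m) a i *: zeta_sh R (m - i) =
  (\sum_(0 <= i < m.-1) a i * zeta R (m - i))%:P + a m.-1 *: 'X.
Proof.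
case: m => // m _; rewrite big_nat_recr //= subSnn /zeta_sh eqxx rmorph_sum.
congr (_ + _); apply: eq_big_nat => i /andP[_ i_lt].
by rewrite ifF ?scale_polyC //; apply/eqP; lia.
Qed.

Unset Implicit Arguments.

Theorem theorem2p3 (R : realType) (m n : nat) (hm : (1 < m)%N) (hn : (1 < n)%N) :
  (zeta2 R m n)%:P =
    \sum_(0 <= i < m)
       (((-1) ^+ i * ('C(n + i - 1, i))%:R * zeta R (n + i)) *: zeta_sh R (m - i))
    + (-1) ^+ m *:
       \sum_(0 <= j < n)
         (('C(m + j - 1, j))%:R *:
            (zeta R (m + j) *: zeta_sh R (n - j) - (zeta2_star R (n - j) (m + j))%:P)).
Proof.
rewrite (zeta2_closed_form R hm hn) /multichoose [in RHS](sum_scale_zeta_sh _ (ltnW hm)).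
under [X in (-1) ^+ m *: X]eq_bigr do rewrite scalerBr scalerA scale_polyC.
rewrite sumrB (sum_scale_zeta_sh _ (ltnW hn)) -rmorph_sum.
have X_cancel : (-1) ^+ m.-1 * 'C(n + m.-1 - 1, m.-1)%:R * zeta R (n + m.-1) =
    - ((-1) ^+ m * ('C(m + n.-1 - 1, n.-1)%:R * zeta R (m + n.-1))).
  case: m n hm hn => [|m] [|n] // _ _ /=.
  rewrite -/(multichoose n.+1 m) -/(multichoose m.+1 n) -multichooseC.
  by rewrite [(n.+1 + m)%N]addnC -addSnnS exprS; ring.
rewrite X_cancel -!mul_polyC !(rmorphN, rmorphM, rmorphD, rmorphB); ring.
Qed.
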